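(* Let $(u,v),(u',v')\in\mathcal A$ and let $t,j,k\in\mathbb Z$ with $1\le t<k$, $u'\le u$ and $j\le -u$. Then (i) $d(k;u+j,v,u'+j,v')=d(k;u,v,u',v')$; (ii) $d(k;0,1,u',v')=d(k;0,v',u'-v'+1,1)$; (iii) $d(k;u,v,u',v')=d(k-t;u,v+t,u',v')$; (iv) if moreover $u'<0$, then $d(k;0,1,u',1)=\binom{-2u'-k}{-u'-k+1}\dfrac{k-1}{-u'}$.
   Context: Binomial coefficients $\binom{a}{b}$ with $a\ge0$ are $0$ when $b<0$ or $b>a$. Let $\mathcal A=\{(\ell,r)\in\mathbb Z^2:\ell\le 0,\ r\ge 1\}$. For $(u,v),(u',v')\in\mathcal A$ and $k\in\mathbb Z$, $\mathcal D(k;u,v,u',v')$ is the set of lattice paths from $(u,v)$ to $(u',v')$, all of whose points lie in $\mathcal A$, using only steps $\mathsf U=(0,1)$ and $\mathsf D=(-1,-1)$, which contain exactly $k$ lattice points (counting start and end) on the line $\{(\ell,1):\ell\le 0\}$; and $d(k;u,v,u',v')=|\mathcal D(k;u,v,u',v')|$. *)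

From mathcomp Require Import all_boot all_order all_algebra.
Set Implicit Arguments. Unset Strict Implicit. Unset Printing Implicit Defensive.
Import Order.TTheory GRing.Theory Num.Theory.
Local Open Scope ring_scope.

Definition pt := (int * int)%type.

Definition inA (p : pt) : bool := (p.1 <= 0) && (1 <= p.2).

Definition onLine (p : pt) : bool := (p.2 == 1) && (p.1 <= 0).

(* a step: true = U = (0,1), false = D = (-1,-1) *)
Definition step (p : pt) (b : bool) : pt :=
  if b then (p.1, p.2 + 1) else (p.1 - 1, p.2 - 1).

Fixpoint pts (p : pt) (s : seq bool) : seq pt :=
  p :: match s with [::] => [::] | b :: s' => pts (step p b) s' end.

(* number of steps of any U/D path from (u,v) to (u',v'):
   #D = u - u', #U = v' - v + (u - u'). (If one of these is negative there is
   no such path; the endpoint check below then makes the count 0.) *)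
Definition plen (u v u' v' : int) : nat := addn (absz (u - u')) (absz (v' - v + (u - u'))).

Definition dcount (k u v u' v' : int) : nat :=
  #|[set s : (plen u v u' v').-tuple bool |
      [&& all inA (pts (u, v) s),
          last (u, v) (pts (u, v) s) == (u', v')
        & (count onLine (pts (u, v) s))%:Z == k]]|.

(* binomial coefficient with integer arguments, 0 when b < 0 or b > a
   (and 0 when a < 0; the paper only uses a >= 0 or b < 0). *)
Definition binomZ (a b : int) : nat :=
  if (0 <= a) && (0 <= b) then 'C(absz a, absz b) else 0%N.

From mathcomp Require Import all_boot all_order all_algebra zify.
Import Order.TTheory GRing.Theory Num.Theory.
Set Implicit Arguments. Unset Strict Implicit. Unset Printing Implicit Defensive.

(* A U/D path inside A is governed by its height h = v - 1 >= 0 alone: each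
   D step moves one unit left, and the path meets the line {(l,1) : l <= 0}
   exactly at its points of height 0.  Hence, for u' <= u, d(k;u,v,u',v') is
   the number [walks N h h' k] of +1/-1 walks on the nonnegative integers of
   the length N forced by the endpoints, from height h = v - 1 to h' = v' - 1,
   visiting 0 exactly k times ([dcount_walks]). *)

Definition nwords (N : nat) (P : seq bool -> bool) : nat :=
  #|[set s : N.-tuple bool | P s]|.

Lemma nwords0 (P : seq bool -> bool) : nwords 0 P = P [::].
Proof.
rewrite /nwords; case: (boolP (P [::])) => P0.
  have -> : [set s : 0.-tuple bool | P s] = setT.
    by apply/setP => x; rewrite !inE tuple0.
  by rewrite cardsT card_tuple.
by apply: eq_card0 => x; rewrite !inE tuple0 (negbTE P0).
Qed.

Lemma nwordsS (N : nat) (P : seq bool -> bool) :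
  nwords N.+1 P = nwords N (fun s => P (true :: s)) + nwords N (fun s => P (false :: s)).
Proof.
have cons_inj b : injective (fun s : N.-tuple bool => cons_tuple b s).
  by move=> x y /(congr1 val) [] /val_inj.
have first_letter b : #|[set s : N.+1.-tuple bool | P s & thead s == b]|
                      = nwords N (fun s => P (b :: s)).
  rewrite /nwords -(card_imset _ (cons_inj b)); apply: eq_card => x.
  case/tupleP: x => c x; rewrite !inE theadE; apply/andP/imsetP.
    by case=> Px /eqP <-; exists x; rewrite ?inE //; apply: val_inj.
  by case=> y; rewrite inE => Py /(congr1 val) [-> /val_inj ->].
rewrite -(first_letter true) -(first_letter false) /nwords.
rewrite -(cardsID [set s : N.+1.-tuple bool | thead s]).
by congr addn; apply: eq_card => s; rewrite !inE; case: (thead s); rewrite ?andbT ?andbF.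
Qed.

Lemma eq_nwords (N : nat) (P Q : seq bool -> bool) :
  (forall s, size s = N -> P s = Q s) -> nwords N P = nwords N Q.
Proof. by move=> PQ; apply: eq_card => s; rewrite !inE PQ // size_tuple. Qed.

Lemma nwords_pred0 (N : nat) : nwords N (fun _ => false) = 0.
Proof. by apply: eq_card0 => s; rewrite !inE. Qed.

(* [walks N h h' k] is the number of walks of N steps +1 / -1 on the
   nonnegative integers from h to h' that visit 0 exactly k times, counting
   the start and the end. *)
Fixpoint walks (N h h' k : nat) : nat :=
  match N with
  | 0 => (h == h') && (k == (h == 0))
  | N'.+1 => if h == 0 then (if k is k'.+1 then walks N' 1 h' k' else 0)
             else walks N' h.+1 h' k + walks N' h.-1 h' k
  end.

Lemma walksS (N h h' k : nat) : walks N.+1 h h' k =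
  if h == 0 then (if k is k'.+1 then walks N 1 h' k' else 0)
  else walks N h.+1 h' k + walks N h.-1 h' k.
Proof. by []. Qed.

Lemma walksS_pos (N h h' k : nat) :
  walks N.+1 h.+1 h' k = walks N h.+2 h' k + walks N h h' k.
Proof. by []. Qed.

Lemma walks0_visits (h h' k : nat) : 2 <= k -> walks 0 h h' k = 0.
Proof. by case: k => [|[|k]] //=; case: (h == h'); case: (h == 0). Qed.

Lemma walks_reach (N h h' k : nat) : walks N h h' k != 0 -> h <= h' + N.
Proof.
elim: N h k => [|N IH] h k; first by rewrite addn0 /=; case: (eqVneq h h') => [->|].
rewrite walksS; case: (eqVneq h 0) => [->|_] //.
case: (boolP (walks N h.+1 h' k == 0)) => [/eqP ->|/IH]; last lia.
by move/IH; lia.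
Qed.

Lemma walks_raise1 (N h h' k : nat) : 2 <= k -> walks N.+1 h h' k = walks N h.+1 h' k.-1.
Proof.
move=> k_ge2; elim: N h => [|N IH] h; rewrite walksS.
  case: (eqVneq h 0) => [->|_]; first by case: k k_ge2.
  by case: k k_ge2 => [|[|k]] // _; rewrite !(@walks0_visits _ _ k.+2) //= andbF.
case: (eqVneq h 0) => [->|h_neq0]; first by case: k k_ge2 IH.
by rewrite !IH walksS; case: h h_neq0.
Qed.

Lemma walks_raise (t N h h' k : nat) : t < k ->
  walks N h h' k = if t <= N then walks (N - t) (h + t) h' (k - t) else 0.
Proof.
elim: t => [|t IH] t_lt_k; first by rewrite leq0n !subn0 addn0.
rewrite IH; last exact: ltnW.
case: (leqP t.+1 N) => [t_lt_N|N_le_t].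
  rewrite ltnW // (_ : N - t = (N - t.+1).+1); last lia.
  by rewrite walks_raise1 ?addnS ?subnS //; lia.
case: (leqP t N) => // t_le_N.
by rewrite (_ : N = t) ?subnn ?walks0_visits //; lia.
Qed.

Lemma walks_last (N h h' k : nat) : walks N.+1 h h' k =
  if h' == 0 then (if k is k'.+1 then walks N h 1 k' else 0)
  else walks N h h'.+1 k + walks N h h'.-1 k.
Proof.
elim: N h h' k => [|N IH] h h' k.
  by case: h => [|[|h]]; case: h' => [|[|h']]; case: k => [|[|k]] //=; rewrite ?eqSS; lia.
rewrite (walksS N.+1).
case: (eqVneq h 0) => [->|h_neq0]; case: (eqVneq h' 0) => [->|h'_neq0].
- by case: k.
- by case: k => [|k]; rewrite !(walksS N 0) // (IH 1 h' k) (negbTE h'_neq0).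
- by rewrite (IH h.+1 0 k) (IH h.-1 0 k); case: k => [|k] //=; rewrite (negbTE h_neq0).
- rewrite (IH h.+1 h' k) (IH h.-1 h' k) (negbTE h'_neq0) !(walksS N h) (negbTE h_neq0).
  by rewrite addnACA.
Qed.

Lemma walks_sym (N h h' k : nat) : walks N h h' k = walks N h' h k.
Proof.
elim: N h h' k => [|N IH] h h' k; first by rewrite /=; case: (eqVneq h h') => [->|].
rewrite walksS walks_last; case: (h == 0); last by rewrite !(IH _ h').
by case: k => [|k] //; rewrite IH.
Qed.

Lemma walks_no_visit (N h : nat) : walks N h 0 0 = 0.
Proof.
elim: N h => [|N IH] h; first by rewrite /=; case: eqP => // ->.
by rewrite walksS !IH; case: eqP.
Qed.

Lemma walks_return_once (N : nat) : walks N.+1 0 0 1 = 0.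
Proof. by rewrite walksS /= walks_no_visit. Qed.

Lemma walks_descent (a : nat) : walks a a 0 1 = 1.
Proof.
elim: a => [|a IH] //; rewrite walksS_pos IH (_ : walks a a.+2 0 1 = 0) //.
by apply/eqP; apply: contraT => /walks_reach; lia.
Qed.

Definition binom_pred (n j : nat) : nat := if j is j'.+1 then 'C(n, j') else 0.

Lemma binom_predS (n j : nat) : binom_pred n j.+1 = 'C(n, j).
Proof. by []. Qed.

Lemma binom_pred_pascal (n j : nat) : 'C(n.+1, j) = 'C(n, j) + binom_pred n j.
Proof. by case: j => [|j] //=; rewrite !bin0. Qed.

Lemma binom_pred_mul (m j : nat) : j <= m -> binom_pred m j * (m.+1 - j) = j * 'C(m, j).
Proof. by case: j => [|j] // _; rewrite /= subSS mulnC -mul_bin_left. Qed.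

(* Reflection principle: the walks of length a + 1 + 2j from a + 1 to 0 that
   visit 0 only at their end number 'C(a + 2j, j) - 'C(a + 2j, j - 1). *)
Lemma walks_reflection (a j : nat) :
  walks (a + j.*2).+1 a.+1 0 1 + binom_pred (a + j.*2) j = 'C(a + j.*2, j).
Proof.
elim: j a => [|j IHj] a; first by rewrite double0 addn0 bin0 walks_descent.
rewrite doubleS; elim: a => [|a IHa]; rewrite !addnS walksS_pos binom_predS.
  have := IHj 1; rewrite add0n add1n walks_return_once addn0 binS.
  have sym_bin : 'C(j.*2.+1, j.+1) = 'C(j.*2.+1, j).
    by rewrite -bin_sub ?subSS -?addnn ?addnK // ltnS leq_addr.
  by rewrite sym_bin (binom_pred_pascal j.*2.+1 j); lia.
have := IHj a.+2; rewrite !addnS binom_predS in IHa; rewrite !addSn in IHa *.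
by rewrite binS (binom_pred_pascal (a + j.*2).+2); lia.
Qed.

(* Ballot theorem, in the multiplicative form used for statement (iv). *)
Lemma walks_ballot (a j : nat) :
  walks (a + j.*2).+1 a.+1 0 1 * (a + j).+1 = 'C(a + j.*2, j) * a.+1.
Proof.
have j_le : j <= a + j.*2 by lia.
have pred_mul := binom_pred_mul j_le.
rewrite (_ : (a + j.*2).+1 - j = (a + j).+1) in pred_mul; last lia.
apply/eqP; rewrite -(eqn_add2r (binom_pred (a + j.*2) j * (a + j).+1)) -mulnDl.
by rewrite walks_reflection pred_mul (mulnC j) -mulnDr addSn.
Qed.

(* Walks of length 2N from 0 to 0 with k >= 2 visits of 0: after raising the
   start by k - 1 this is the ballot count. *)
Lemma walks_excursions (N k : nat) : 1 < k ->
  walks (N + N) 0 0 k * N = (if k <= N.+1 then 'C(N + N - k, N.+1 - k) else 0) * k.-1.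
Proof.
case: k => [|[|a]] // _; rewrite (@walks_raise a.+1) // add0n subSS subSnn.
case: (leqP a.+2 N.+1) => [|N_lt]; last first.
  case: ifP => // _; suff -> : walks (N + N - a.+1) a.+1 0 1 = 0 by [].
  by apply/eqP; apply: contraT => /walks_reach; lia.
rewrite ltnS => /subnKC <-; set j := N - a.+1.
rewrite ifT; last lia.
rewrite (_ : a.+1 + j + (a.+1 + j) - a.+1 = (a + j.*2).+1); last lia.
rewrite (_ : a.+1 + j + (a.+1 + j) - a.+2 = a + j.*2); last lia.
rewrite (_ : (a.+1 + j).+1 - a.+2 = j); last lia.
by rewrite -walks_ballot addSn.
Qed.

Fixpoint walk_ok (h : nat) (s : seq bool) (h' k : nat) : bool :=
  match s with
  | [::] => (h == h') && (k == (h == 0))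
  | b :: s' => if b then ((h == 0) <= k) && walk_ok h.+1 s' h' (k - (h == 0))
               else (h != 0) && walk_ok h.-1 s' h' k
  end.

Lemma nwords_walk_ok (N h h' k : nat) : nwords N (fun s => walk_ok h s h' k) = walks N h h' k.
Proof.
elim: N h k => [|N IH] h k; first by rewrite nwords0.
rewrite nwordsS walksS; case: (eqVneq h 0) => [->|h_neq0].
  rewrite (@eq_nwords _ (fun s => walk_ok 0 (false :: s) h' k) (fun _ => false)) //.
  rewrite nwords_pred0 addn0; case: k => [|k].
    by rewrite (@eq_nwords _ _ (fun _ => false)) ?nwords_pred0.
  by rewrite -IH; apply: eq_nwords => s _ /=; rewrite subn1.
by rewrite -!IH; congr addn; apply: eq_nwords => s _ /=; rewrite (negbTE h_neq0) ?subn0.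
Qed.

Lemma walk_ok_size (h h' k : nat) (s : seq bool) :
  walk_ok h s h' k -> 2 * count negb s + h' = size s + h.
Proof.
elim: s h k => [|b s IH] h k /=; first by case/andP => /eqP ->.
case: b => /=; first by case/andP => _ /IH; lia.
by case/andP; case: h => [|h] //= _ /IH; lia.
Qed.

Local Open Scope ring_scope.

Lemma last_pts (x p : pt) (s : seq bool) : last x (pts p s) = last p (pts p s).
Proof. by case: s. Qed.

Lemma step_up (u : int) (h : nat) : step (u, Posz h) true = (u, Posz h.+1).
Proof. by rewrite /step /= -addn1. Qed.

Lemma step_down (u : int) (h : nat) : step (u, Posz h.+1) false = (u - 1, Posz h).
Proof. by rewrite /step /= -addn1 PoszD addrK. Qed.

Lemma inA_height (u : int) (h : nat) : u <= 0 -> inA (u, Posz h.+1).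
Proof. by rewrite /inA /= => ->. Qed.

Lemma onLine_height (u : int) (h : nat) : u <= 0 -> onLine (u, Posz h.+1) = (h == 0)%N.
Proof. by move=> u_le0; rewrite /onLine /= u_le0 andbT eqz_nat eqSS. Qed.

Lemma path_walk_ok (s : seq bool) (u u' : int) (h h' k : nat) : u <= 0 ->
  [&& all inA (pts (u, Posz h.+1) s),
      last (u, Posz h.+1) (pts (u, Posz h.+1) s) == (u', Posz h'.+1)
    & (count onLine (pts (u, Posz h.+1) s))%:Z == k%:Z]
  = walk_ok h s h' k && (u' == u - (count negb s)%:Z).
Proof.
elim: s u h k => [|b s IH] u h k u_le0.
  rewrite /= /inA onLine_height //= u_le0 subr0 xpair_eqE !eqz_nat eqSS addn0.
  by rewrite [u' == u]eq_sym [k == _]eq_sym; case: (u == u'); rewrite ?andbT ?andbF.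
rewrite /= last_pts onLine_height // inA_height //=.
case: b.
  rewrite step_up add0n; case: (eqVneq h 0%N) => [->|h_neq0]; last first.
    by rewrite add0n subn0 -IH.
  case: k => [|k]; first by rewrite /= !andbF.
  by rewrite subn1 -(IH u 1%N k u_le0) !eqz_nat add1n eqSS.
rewrite step_down; case: h => [|h] /=; first by case: s {IH} => [|? ?]; rewrite /= /inA /= andbF.
have u1_le0 : u - 1 <= 0 by lia.
by rewrite add0n IH // PoszD opprD addrA.
Qed.

(* d(k;u,h+1,u',h'+1) as a count of walks, for u' <= u: the path has u - u'
   down steps and h' - h + (u - u') up steps, and there is no path at all when
   the latter number is negative. *)
Lemma dcount_walks (u u' : int) (h h' k : nat) : u <= 0 -> u' <= u ->
  dcount k u (Posz h.+1) u' (Posz h'.+1) =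
  if 0 <= Posz h'.+1 - Posz h.+1 + (u - u')
  then walks (plen u (Posz h.+1) u' (Posz h'.+1)) h h' k else 0%N.
Proof.
move=> u_le0 u'_le_u.
have -> : dcount k u (Posz h.+1) u' (Posz h'.+1) =
    nwords (plen u (Posz h.+1) u' (Posz h'.+1))
      (fun s => walk_ok h s h' k && (u' == u - (count negb s)%:Z)).
  by apply: eq_card => s; rewrite !inE path_walk_ok.
have [D downs] : exists D : nat, u - u' = D.
  by exists (absz (u - u')); rewrite gez0_abs // subr_ge0.
case: ifP => ups_ge0.
  have [U ups] : exists U : nat, Posz h'.+1 - Posz h.+1 + (u - u') = U.
    by exists (absz (Posz h'.+1 - Posz h.+1 + (u - u'))); rewrite gez0_abs.
  rewrite /plen ups downs -nwords_walk_ok; apply: eq_nwords => s s_size.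
  case ok: walk_ok => //=; have := walk_ok_size ok; rewrite s_size => size_eq.
  by apply/eqP; lia.
have [V ups] : exists V : nat, Posz h'.+1 - Posz h.+1 + (u - u') = - (V%:Z).
  exists (absz (Posz h'.+1 - Posz h.+1 + (u - u'))).
  by rewrite ltz0_abs ?opprK // ltNge ups_ge0.
rewrite /plen ups downs abszN -(nwords_pred0 (D + V)); apply: eq_nwords => s s_size.
case ok: walk_ok => //=; have := walk_ok_size ok; rewrite s_size => size_eq.
by apply/negbTE/eqP => down_count; lia.
Qed.

Lemma inAP (u v : int) : inA (u, v) -> u <= 0 /\ exists h : nat, v = Posz h.+1.
Proof. by rewrite /inA /= => /andP[u_le0]; case: v => [[|h]|n] // _; split => //; exists h. Qed.

Lemma dcount_translate (k : nat) (u v u' v' j : int) :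
  inA (u, v) -> inA (u', v') -> u' <= u -> u + j <= 0 ->
  dcount k (u + j) v (u' + j) v' = dcount k u v u' v'.
Proof.
case/inAP => u_le0 [h ->]; case/inAP => _ [h' ->] u'_le_u uj_le0.
have shift : u + j - (u' + j) = u - u' by rewrite opprD addrACA subrr addr0.
by rewrite !dcount_walks ?lerD2r // /plen shift.
Qed.

Lemma dcount_reverse (k : nat) (u' v' : int) :
  inA (u', v') -> dcount k 0 1 u' v' = dcount k 0 v' (u' - v' + 1) 1.
Proof.
case/inAP => u'_le0 [h' ->].
rewrite (@dcount_walks 0 u' 0 h') // (@dcount_walks 0 _ h' 0) //; last lia.
rewrite !ifT; [|lia|lia].
by rewrite walks_sym /plen addnC; congr walks; congr addn; congr absz; lia.
Qed.

Lemma dcount_raise (t k : nat) (u v u' v' : int) :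
  inA (u, v) -> inA (u', v') -> u' <= u -> (t < k)%N ->
  dcount k u v u' v' = dcount (k - t)%N u (v + t%:Z) u' v'.
Proof.
case/inAP => u_le0 [h ->]; case/inAP => _ [h' ->] u'_le_u t_lt_k.
rewrite -PoszD addSn !dcount_walks //.
have [D downs] : exists D : nat, u - u' = D.
  by exists (absz (u - u')); rewrite gez0_abs // subr_ge0.
rewrite /plen downs; case: ifP => [ups_ge0|ups_lt0]; last first.
  by rewrite ifF //; apply/negbTE; move/negbT: ups_lt0; lia.
have [U ups] : exists U : nat, Posz h'.+1 - Posz h.+1 + D = U.
  by exists (absz (Posz h'.+1 - Posz h.+1 + D)); rewrite gez0_abs.
rewrite ups /= (walks_raise _ _ _ t_lt_k).
case: (boolP (0 <= Posz h'.+1 - Posz (h + t).+1 + D)) => [raised_ge0|raised_lt0] /=.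
  have raised_ups : Posz h'.+1 - Posz (h + t).+1 + D = (U - t)%N by lia.
  by rewrite raised_ups ifT; [congr walks | ]; lia.
case: ifP => // _; apply/eqP; apply: contraT => /walks_reach; move: raised_lt0; lia.
Qed.

Lemma dcount_line (k : nat) (u' : int) : (1 < k)%N -> u' < 0 ->
  ((dcount k 0 1 u' 1)%:R : rat)
    = (binomZ (- 2 * u' - k%:Z) (- u' - k%:Z + 1))%:R * ((k%:Z - 1)%:~R / (- u')%:~R).
Proof.
move=> k_gt1; case: u' => [N|N] //= _; rewrite NegzE.
move: (ltn0Sn N) (walks_excursions N.+1 k_gt1); move: N.+1 => n n_gt0 excursions.
rewrite (@dcount_walks 0 _ 0 0) ?oppr_le0 // ifT; last lia.
rewrite /plen sub0r opprK subrr add0r /=.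
have -> : binomZ (- 2 * - n%:Z - k%:Z) (n%:Z - k%:Z + 1)
          = if (k <= n.+1)%N then 'C(n + n - k, n.+1 - k) else 0%N.
  rewrite /binomZ; case: leqP => k_le.
    have top : - 2 * - n%:Z - k%:Z = (n + n - k)%N by rewrite mulrN mulNr opprK; lia.
    have bot : n%:Z - k%:Z + 1 = (n.+1 - k)%N by lia.
    by rewrite top bot.
  have bot : n%:Z - k%:Z + 1 < 0 by lia.
  by rewrite [0 <= _ + 1]leNgt bot andbF.
have k_pred : k%:Z - 1 = k.-1 by lia.
rewrite k_pred -[(Posz k.-1)%:~R]/(k.-1%:R : rat) -[(Posz n)%:~R]/(n%:R : rat).
have n_neq0 : n%:R != 0 :> rat by rewrite pnatr_eq0 -lt0n.
by rewrite mulrA -natrM -excursions natrM mulfK.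
Qed.

Unset Implicit Arguments.

Theorem lemma5p2 (u v u' v' t j k : int) :
  inA (u, v) -> inA (u', v') ->
  1 <= t -> t < k -> u' <= u -> j <= - u ->
  [/\ dcount k (u + j) v (u' + j) v' = dcount k u v u' v',
      dcount k 0 1 u' v' = dcount k 0 v' (u' - v' + 1) 1,
      dcount k u v u' v' = dcount (k - t) u (v + t) u' v'
    & u' < 0 ->
      ((dcount k 0 1 u' 1)%:R : rat)
        = (binomZ (- 2 * u' - k) (- u' - k + 1))%:R * ((k - 1)%:~R / (- u')%:~R)].
Proof.
move=> uvA u'v'A t_ge1 t_lt_k u'_le_u j_le.
have [n tE] : exists n : nat, t = n by exists (absz t); rewrite gez0_abs //; lia.
have [m kE] : exists m : nat, k = m by exists (absz k); rewrite gez0_abs //; lia.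
subst t k.
split.
- by apply: dcount_translate => //; lia.
- exact: dcount_reverse.
- have n_lt_m : (n < m)%N by lia.
  by rewrite subzn ?(ltnW n_lt_m) // (dcount_raise uvA u'v'A u'_le_u n_lt_m).
- by move=> u'_lt0; apply: dcount_line => //; lia.
Qed.
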